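(* For any Euclidean function $\sigma$ on an integral domain $A$, the following conditions are equivalent: (a) $\sigma$ is non-archimedean and satisfies $\sigma(ab) = \sigma(a)+\sigma(b)$ for all $a,b \in A$. (b) The function $2^\sigma: A \to \mathbb{N}$, $a\mapsto 2^{\sigma(a)}$, is a non-archimedean norm on the domain $A$. (c) The function $2^\sigma$ is a norm on $A$, and the prime subring of $A$ is contained in $\{a \in A: \sigma(a) \leq \sigma(1)\} = A^\times \cup \{0\}$. (d) The function $2^\sigma$ is a norm on $A$, and $A$ contains a field. (e) The factroids of $A$ are the sets $C_n := \{a \in A: \sigma(a) \leq n\}$ for all $n \in \sigma(A) \cup \{\infty\}$ (which are distinct for all $n \in \sigma(A)$), and the level sets $D_n := \{a \in A: \sigma(a) = n\}$ satisfy $D_m D_n \subseteq D_{m+n}$ for all $m,n \in \sigma(A)$. Moreover, a domain $A$ admits a Euclidean function satisfying the equivalent conditions above if and only if $A$ is a field or $A \cong k[x]$ for some field $k$.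
   Context: A Euclidean function on an integral domain $A$ is a function $\sigma:A\to\mathbb{N}\cup\{-\infty\}$ such that $\sigma(a)=-\infty$ iff $a=0$; for all $a,b\in A$ with $b\neq 0$ there exist $q,r\in A$ with $a=bq+r$ and $\sigma(r)<\sigma(b)$; and $\sigma(a)\le\sigma(ab)$ for all $a,b$ with $b\ne0$. It is non-archimedean if $\sigma(a+b)\le\max\{\sigma(a),\sigma(b)\}$. Here $2^{-\infty}=0$. A norm on $A$ is a function $N:A\to\mathbb{R}_{\ge0}$ with $N(a)=0$ iff $a=0$, $N(ab)=N(a)N(b)$ and $N(a+b)\le N(a)+N(b)$; it is non-archimedean if $N(a+b)\le\max\{N(a),N(b)\}$. A factroid of $A$ is an additive subgroup $F$ of $A$ such that $ba\in F$ with $b\ne 0$ implies $a\in F$. $D_mD_n=\{xy\mid x\in D_m, y\in D_n\}$. *)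

From HB Require Import structures.
From mathcomp Require Import all_boot all_order all_algebra.
Set Implicit Arguments. Unset Strict Implicit. Unset Printing Implicit Defensive.
Import Order.TTheory GRing.Theory Num.Theory.
Local Open Scope ring_scope.

(* Values of a Euclidean function: N ∪ {-oo}, encoded as option nat,
   with None = -oo. *)
Definition ole (x y : option nat) : bool :=
  match x, y with
  | None, _ => true
  | Some _, None => false
  | Some m, Some n => (m <= n)%N
  end.
Definition olt (x y : option nat) : bool := ~~ ole y x.
Definition omax (x y : option nat) : option nat := if ole x y then y else x.
Definition oadd (x y : option nat) : option nat :=
  match x, y with
  | Some m, Some n => Some (m + n)%N
  | _, _ => None
  end.
Definition pow2 (R : numDomainType) (x : option nat) : R :=
  match x with None => 0 | Some n => 2 ^+ n end.

Section Defs.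
Variable A : idomainType.

Definition euclidean (sigma : A -> option nat) : Prop :=
  (forall a, sigma a = None <-> a = 0) /\
  (forall a b, b != 0 -> exists q r, a = b * q + r /\ olt (sigma r) (sigma b)) /\
  (forall a b, b != 0 -> ole (sigma a) (sigma (a * b))).

Definition nonarch_euclid (sigma : A -> option nat) : Prop :=
  forall a b, ole (sigma (a + b)) (omax (sigma a) (sigma b)).

Definition is_norm (R : numDomainType) (N : A -> R) : Prop :=
  (forall a, 0 <= N a) /\
  (forall a, N a = 0 <-> a = 0) /\
  (forall a b, N (a * b) = N a * N b) /\
  (forall a b, N (a + b) <= N a + N b).

Definition nonarch_norm (R : numDomainType) (N : A -> R) : Prop :=
  is_norm N /\ forall a b, N (a + b) <= Num.max (N a) (N b).

Definition factroid (F : pred A) : Prop :=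
  0 \in F /\ (forall x y, x \in F -> y \in F -> x - y \in F) /\
  (forall a b, b != 0 -> b * a \in F -> a \in F).

Definition contains_field : Prop :=
  exists K : pred A,
    1 \in K /\ (forall x y, x \in K -> y \in K -> x - y \in K) /\
    (forall x y, x \in K -> y \in K -> x * y \in K) /\
    (forall x, x \in K -> x != 0 -> exists2 y, y \in K & x * y = 1).

Definition is_field : Prop := forall x : A, x != 0 -> x \is a GRing.unit.

End Defs.

From HB Require Import structures.
From mathcomp Require Import all_boot all_order all_algebra.
From mathcomp Require Import zify lra.
From Stdlib Require Import Classical Wf_nat.
Set Implicit Arguments. Unset Strict Implicit. Unset Printing Implicit Defensive.
Import Order.TTheory GRing.Theory Num.Theory.
Local Open Scope ring_scope.

(* Under (a), sigma is additive on products and ultrametric, so its elements of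
   value at most 0 form a subfield K, namely the units and 0.  If sigma takes a
   positive value, let t have the least one, d: dividing by t leaves remainders
   in K and sigma (t q + r) = sigma q + d, so p |-> p(t) is an isomorphism
   K[X] -> A with sigma (p(t)) = d * deg p.  Hence all values are multiples of
   d, which makes every factroid downward closed for sigma, i.e. a sublevel set.
   The norm conditions reduce to (a): multiplicativity of 2^sigma is additivity
   of sigma, and N 2 <= 1 gives N (a + b)^2 <= 3 max (N a, N b)^2, which for
   powers of 2 is the ultrametric inequality. *)

Lemma classical_ex_minn (P : nat -> Prop) :
  (exists n, P n) -> exists2 n, P n & forall m, P m -> (n <= m)%N.
Proof.
move/(@dec_inh_nat_subset_has_unique_least_element P (fun n => classic (P n))).
by case=> n [[Pn n_min] _]; exists n => // m /n_min/ssrnat.leP.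
Qed.

Lemma classical_ex_maxn (P : nat -> Prop) N :
  (exists n, P n) -> (forall n, P n -> (n <= N)%N) ->
  exists2 n, P n & forall m, P m -> (m <= n)%N.
Proof.
move=> [n Pn] le_N.
have [_ [m Pm ->] k_min] := @classical_ex_minn (fun k => exists2 m, P m & k = (N - m)%N)
  (ex_intro _ _ (ex_intro2 _ _ n Pn erefl)).
exists m => // m' Pm'.
have : (N - m <= N - m')%N by apply: k_min; exists m'.
by have := le_N _ Pm'; lia.
Qed.

Lemma ole_refl x : ole x x.
Proof. by case: x => //= n; rewrite leqnn. Qed.

Lemma ole_trans x y z : ole x y -> ole y z -> ole x z.
Proof. by case: x; case: y; case: z => //= a b c; lia. Qed.

Lemma ole_anti x y : ole x y -> ole y x -> x = y.
Proof. by case: x; case: y => //= m n le_nm le_mn; congr Some; lia. Qed.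

Lemma ole_total x y : ole x y || ole y x.
Proof. by case: x; case: y => //= m n; apply: leq_total. Qed.

Lemma oltW x y : olt x y -> ole x y.
Proof. by rewrite /olt; case: x; case: y => //= m n; lia. Qed.

Lemma ole_None x : ole x None = (x == None).
Proof. by case: x. Qed.

Lemma ole_maxl x y : ole x (omax x y).
Proof. by rewrite /omax; case: ifP => // _; apply: ole_refl. Qed.

Lemma ole_maxr x y : ole y (omax x y).
Proof.
rewrite /omax; case: ifP => [_|le_xy]; first exact: ole_refl.
by have := ole_total x y; rewrite le_xy.
Qed.

Lemma ole_omax x y z : ole (omax x y) z = ole x z && ole y z.
Proof.
by rewrite /omax; case: x => [a|]; case: y => [b|]; case: z => [c|] //=; case: leqP => /=; lia.
Qed.

Section Pow2.
Variable R : realFieldType.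

Lemma pow2_ge0 x : 0 <= pow2 R x.
Proof. by case: x => //= n; rewrite exprn_ge0. Qed.

Lemma pow2_eq0 x : pow2 R x = 0 <-> x = None.
Proof. by case: x => //= n; split => // /eqP; rewrite expf_eq0 pnatr_eq0 andbF. Qed.

Lemma pow2_oadd x y : pow2 R (oadd x y) = pow2 R x * pow2 R y.
Proof. by case: x; case: y => //= *; rewrite ?mulr0 ?mul0r // exprD mulrC. Qed.

Lemma ler_pow2 x y : (pow2 R x <= pow2 R y) = ole x y.
Proof.
case: x => [m|]; case: y => [n|] /=.
- by rewrite ler_eXn2l // ltr1n.
- by apply/negbTE; rewrite -ltNge exprn_gt0.
- by rewrite exprn_ge0.
- by rewrite lexx.
Qed.

Lemma pow2_inj : injective (pow2 R).
Proof. by move=> x y eq_xy; apply: ole_anti; rewrite -ler_pow2 eq_xy lexx. Qed.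

Lemma pow2_omax x y : pow2 R (omax x y) = Num.max (pow2 R x) (pow2 R y).
Proof. by rewrite /omax -ler_pow2; case: leP. Qed.

Lemma ole_of_pow2_sqr x y : pow2 R x ^+ 2 <= 3 * pow2 R y ^+ 2 -> ole x y.
Proof.
case: x => [m|] //; case: y => [n|] /=; last first.
  by rewrite expr0n mulr0 -exprM leNgt exprn_gt0 // ltr0n.
rewrite -!exprM => le_mn; rewrite leqNgt; apply/negP => lt_nm.
have : (2 : R) ^+ (n * 2 + 2) <= 2 ^+ (m * 2) by rewrite ler_eXn2l ?ltr1n //; lia.
rewrite exprD => le4; have := le_trans le4 le_mn.
by rewrite mulrC ler_pM2r ?exprn_gt0 // -[3]/(3%:R) -natrX ler_nat.
Qed.
End Pow2.

Definition oadditive (A : idomainType) (sigma : A -> option nat) : Prop :=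
  forall a b, sigma (a * b) = oadd (sigma a) (sigma b).

Definition degree_function (A : idomainType) (sigma : A -> option nat) : Prop :=
  [/\ euclidean sigma, nonarch_euclid sigma & oadditive sigma].

Definition sublevel (A : idomainType) (sigma : A -> option nat) (c : A) : pred A :=
  [pred x | ole (sigma x) (sigma c)].

Lemma contains_fieldP (A : idomainType) (S : {pred A}) :
  GRing.divring_closed S -> {in S, forall x, x != 0 -> x \is a GRing.unit} ->
  contains_field A.
Proof.
case=> S1 SB Sdiv S_unit.
have SV x : x \in S -> x^-1 \in S by rewrite -[x^-1]mul1r; apply: Sdiv.
exists S; split=> //; split=> //; split=> [x y Sx Sy|x Sx x0].
  by rewrite -[y]invrK; apply: Sdiv (SV _ Sy).
by exists x^-1; [apply: SV | apply: mulrV; apply: S_unit].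
Qed.

Lemma contains_field_int_unit (A : idomainType) (z : int) :
  contains_field A -> (z%:~R : A) != 0 -> (z%:~R : A) \is a GRing.unit.
Proof.
case=> K [K1 [KB [_ KV]]] z0.
have K0 : 0 \in K by rewrite -(subrr 1); apply: KB.
have KN x : x \in K -> - x \in K by move=> Kx; rewrite -sub0r; apply: KB.
have Knat n : (n%:R : A) \in K.
  elim: n => // n Kn; rewrite -addn1 natrD.
  by rewrite -[_ + 1]opprK opprD; apply/KN/KB => //; apply/KN.
have Kz : (z%:~R : A) \in K.
  by case: z {z0} => n; [apply: Knat | rewrite NegzE mulrNz; apply/KN/Knat].
by have [y _ zy] := KV _ Kz z0; apply/unitrPr; exists y.
Qed.

Section EuclideanFunction.
Variables (A : idomainType) (sigma : A -> option nat).
Hypothesis euclid : euclidean sigma.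

Lemma euclid_eq0 a : sigma a = None <-> a = 0.
Proof. by case: euclid => eq0 _; apply: eq0. Qed.

Lemma euclid0 : sigma 0 = None.
Proof. exact/euclid_eq0. Qed.

Lemma euclid_le_None a : ole (sigma a) None = (a == 0).
Proof. by rewrite ole_None; apply/eqP/eqP => /euclid_eq0. Qed.

Lemma euclid_neq0 a : a != 0 -> exists n, sigma a = Some n.
Proof.
case E: (sigma a) => [n|] a0; first by exists n.
by move/euclid_eq0: E a0 => ->; rewrite eqxx.
Qed.

Lemma euclid_mulr a b : b != 0 -> ole (sigma a) (sigma (a * b)).
Proof. by case: euclid => _ [_]; apply. Qed.

Lemma euclid_divP a b : b != 0 -> exists q r, a = b * q + r /\ olt (sigma r) (sigma b).
Proof. by case: euclid => _ [+ _]; apply. Qed.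

Lemma euclidN a : sigma (- a) = sigma a.
Proof.
have N1 : (-1 : A) != 0 by rewrite oppr_eq0 oner_eq0.
apply: ole_anti; last by have := euclid_mulr a N1; rewrite mulrN1.
by have := euclid_mulr (- a) N1; rewrite mulrN1 opprK.
Qed.

(* Dividing 1 by [a] leaves a remainder of value below [0], i.e. no remainder. *)
Lemma euclid_le0_unit a : a != 0 -> ole (sigma a) (Some 0) -> a \is a GRing.unit.
Proof.
move=> a0 le_a0; have [q [r [div1 lt_r]]] := euclid_divP 1 a0.
have r0 : r = 0.
  apply/euclid_eq0; move: lt_r le_a0; rewrite /olt.
  by case: (sigma a) => [[]|]; case: (sigma r).
by apply/unitrPr; exists q; rewrite div1 r0 addr0.
Qed.

Section Oadditive.
Hypothesis sigmaM : oadditive sigma.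

Lemma euclid1 : sigma 1 = Some 0.
Proof.
have [n sigma1] := euclid_neq0 (oner_neq0 A).
by have := sigmaM 1 1; rewrite mulr1 sigma1 => -[] ?; congr Some; lia.
Qed.

Lemma euclid_unit a : a \is a GRing.unit -> sigma a = Some 0.
Proof.
move=> ua; have := sigmaM a a^-1; rewrite mulrV // euclid1.
by case: (sigma a) => [n|] //; case: (sigma a^-1) => //= m [] ?; congr Some; lia.
Qed.

Lemma euclid_mul_le0 a b : b != 0 -> ole (sigma (b * a)) (sigma b) -> ole (sigma a) (Some 0).
Proof. by move=> /euclid_neq0[n]; rewrite sigmaM => ->; case: (sigma a) => //= m; lia. Qed.

Hypothesis sigmaD : nonarch_euclid sigma.

Lemma euclidB a b : ole (sigma (a - b)) (omax (sigma a) (sigma b)).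
Proof. by rewrite -(euclidN b); apply: sigmaD. Qed.

Lemma euclidD_eq a b : olt (sigma b) (sigma a) -> sigma (a + b) = sigma a.
Proof.
move=> lt_ba; have le_ba := oltW lt_ba; apply: ole_anti.
  by apply: ole_trans (sigmaD a b) _; rewrite ole_omax ole_refl.
have := euclidB (a + b) b; rewrite addrK /omax; case: ifP => // _ le_ab.
by rewrite /olt le_ab in lt_ba.
Qed.

Definition unit_field : {pred A} := [pred x | ole (sigma x) (Some 0)].

Lemma unit_field_divring_closed : GRing.divring_closed unit_field.
Proof.
split=> [|x y|x y]; rewrite ?inE ?euclid1 // => le_x0 le_y0.
  by apply: ole_trans (euclidB x y) _; rewrite ole_omax le_x0.
have le_y'0 : ole (sigma y^-1) (Some 0).
  by case: (boolP (y \is a GRing.unit)) => [uy|/invr_out ->//]; rewrite euclid_unit ?unitrV.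
rewrite sigmaM; move: le_x0 le_y'0.
by case: (sigma x) => // n; case: (sigma y^-1) => //= m; lia.
Qed.

Lemma unit_field_unit : {in unit_field, forall x, x != 0 -> x \is a GRing.unit}.
Proof. by move=> x le_x0 x0; apply: euclid_le0_unit. Qed.

Lemma contains_field_of_degree : contains_field A.
Proof. exact: contains_fieldP unit_field_divring_closed unit_field_unit. Qed.

End Oadditive.
End EuclideanFunction.

Lemma norm_sqrD_le (R : realFieldType) (A : idomainType) (N : A -> R) (M : R) a b :
  is_norm N -> N 2 <= 1 -> N a <= M -> N b <= M -> N (a + b) ^+ 2 <= 3 * M ^+ 2.
Proof.
case=> N_ge0 [_ [NM ND]] N2_le1 le_aM le_bM.
have sqrD : (a + b) ^+ 2 = a ^+ 2 + 2 * (a * b) + b ^+ 2.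
  by rewrite sqrrD -mulr_natl.
rewrite !expr2 -NM -expr2 sqrD; apply: le_trans (ND _ _) _.
rewrite !expr2 !NM; apply: le_trans (lerD (ND _ _) (lexx _)) _; rewrite !NM.
have [Na Nb] := (N_ge0 a, N_ge0 b).
have := ler_pM Na Na le_aM le_aM; have := ler_pM Nb Nb le_bM le_bM.
have := ler_pM Na Nb le_aM le_bM; have := ler_piMl (mulr_ge0 Na Nb) N2_le1.
lra.
Qed.

Section NormOfEuclidean.
Variables (R : realFieldType) (A : idomainType) (sigma : A -> option nat).
Hypothesis euclid : euclidean sigma.
Local Notation N := (fun a => pow2 R (sigma a)).

Lemma is_norm_oadditive : is_norm N -> oadditive sigma.
Proof. by case=> _ [_ [NM _]] a b; apply: (@pow2_inj R); rewrite pow2_oadd NM. Qed.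

Lemma nonarch_normP : nonarch_norm N <-> nonarch_euclid sigma /\ oadditive sigma.
Proof.
have nonarchE a b :
    (N (a + b) <= Num.max (N a) (N b)) = ole (sigma (a + b)) (omax (sigma a) (sigma b)).
  by rewrite -pow2_omax ler_pow2.
split=> [[normN N_nonarch]|[sigmaD sigmaM]].
  by split=> [a b|]; [rewrite -nonarchE | apply: is_norm_oadditive].
split=> [|a b]; last by rewrite nonarchE.
split=> [a|]; first exact: pow2_ge0.
split=> [a|]; first by rewrite pow2_eq0; apply: euclid_eq0.
split=> [a b|a b]; first by rewrite sigmaM pow2_oadd.
apply: le_trans (_ : Num.max (N a) (N b) <= _); first by rewrite nonarchE.
by rewrite ge_max !lerDl !lerDr !pow2_ge0.
Qed.

Lemma nonarch_of_norm_int :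
  is_norm N -> (forall z : int, ole (sigma z%:~R) (sigma 1)) -> nonarch_euclid sigma.
Proof.
move=> normN le_int a b; have sigmaM := is_norm_oadditive normN.
have N2_le1 : N 2 <= 1.
  by have := le_int 2%:Z; rewrite -pmulrn (euclid1 euclid sigmaM) -(ler_pow2 R).
apply: (@ole_of_pow2_sqr R); rewrite pow2_omax.
by apply: (norm_sqrD_le (N := N)) => //; rewrite le_max lexx ?orbT.
Qed.

Lemma norm_int_le_of_contains_field :
  is_norm N -> contains_field A -> forall z : int, ole (sigma z%:~R) (sigma 1).
Proof.
move=> normN hasK z; have sigmaM := is_norm_oadditive normN.
have [->|z0] := eqVneq (z%:~R : A) 0; first by rewrite (euclid0 euclid).
by rewrite !(euclid_unit euclid sigmaM) ?unitr1 ?contains_field_int_unit //= leqnn.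
Qed.

End NormOfEuclidean.

Section Factroid.
Variables (A : idomainType) (F : pred A).
Hypothesis fF : factroid F.

Lemma factroid0 : 0 \in F.
Proof. by case: fF. Qed.

Lemma factroidB x y : x \in F -> y \in F -> x - y \in F.
Proof. by case: fF => _ [+ _]; apply. Qed.

Lemma factroidD x y : x \in F -> y \in F -> x + y \in F.
Proof.
move=> Fx Fy; rewrite -[y]opprK; apply: factroidB => //.
by rewrite -sub0r; apply: factroidB => //; apply: factroid0.
Qed.

Lemma factroid_cancel a b : b != 0 -> b * a \in F -> a \in F.
Proof. by case: fF => _ [_]; apply. Qed.

Lemma factroidM_unit x u : u \is a GRing.unit -> x \in F -> x * u \in F.
Proof.
move=> uu Fx; have u0 : u != 0 by apply: contraTneq uu => ->; rewrite unitr0.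
by apply: (@factroid_cancel _ u^-1); rewrite ?invr_eq0 // mulrCA mulVr ?mulr1.
Qed.

Lemma factroid_unit x u : x != 0 -> x \in F -> u \is a GRing.unit -> u \in F.
Proof.
move=> x0 Fx uu; have u0 : u != 0 by apply: contraTneq uu => ->; rewrite unitr0.
by apply: (@factroid_cancel _ (x / u)); rewrite ?mulf_neq0 ?invr_eq0 ?divrK.
Qed.

End Factroid.

Lemma factroid_eq (A : idomainType) (F G : pred A) : F =i G -> factroid G -> factroid F.
Proof.
move=> eqFG [G0 [GB Gcancel]]; split; first by rewrite eqFG.
by split=> [x y|a b]; rewrite !eqFG; [apply: GB | apply: Gcancel].
Qed.

Lemma factroidT (A : idomainType) : factroid (predT : pred A).
Proof. by []. Qed.

Section SublevelFactroid.
Variables (A : idomainType) (sigma : A -> option nat).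
Hypotheses (euclid : euclidean sigma) (sigmaD : nonarch_euclid sigma).

Lemma sublevel_factroid c : factroid (sublevel sigma c).
Proof.
split; first by rewrite inE (euclid0 euclid).
split=> [x y|a b b0]; rewrite !inE.
  move=> le_x le_y; apply: ole_trans (euclidB euclid sigmaD x y) _.
  by rewrite ole_omax le_x le_y.
by move=> le_ba; apply: ole_trans le_ba; rewrite mulrC; apply: euclid_mulr.
Qed.

Lemma factroid_unit_field F x r :
  factroid F -> x != 0 -> x \in F -> r \in unit_field sigma -> r \in F.
Proof.
move=> fF x0 Fx Kr; have [->|r0] := eqVneq r 0; first exact: factroid0.
exact: (factroid_unit fF x0 Fx (unit_field_unit euclid Kr r0)).
Qed.

End SublevelFactroid.

Section SubfieldType.
Variables (A : idomainType) (S : {pred A}).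
Hypotheses (S_divring : GRing.divring_closed S)
  (S_unit : {in S, forall x, x != 0 -> x \is a GRing.unit}).

Record subfield_of := SubfieldOf { subfield_val : A; _ : subfield_val \in S }.
HB.instance Definition _ := [isSub for subfield_val].
HB.instance Definition _ := [Choice of subfield_of by <:].
HB.instance Definition _ :=
  GRing.SubChoice_isSubIntegralDomain.Build A S subfield_of S_divring.

Lemma subfield_field_axiom : GRing.field_axiom subfield_of.
Proof.
move=> x x0; apply: S_unit (valP x) _.
by apply: contra x0 => /eqP vx0; apply/eqP/val_inj.
Qed.
HB.instance Definition _ := GRing.ComUnitRing_isField.Build subfield_of subfield_field_axiom.

Definition subfield_fieldType : fieldType := subfield_of.

End SubfieldType.

Section DegreeStructure.
Variables (A : idomainType) (sigma : A -> option nat).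
Hypotheses (euclid : euclidean sigma) (sigmaD : nonarch_euclid sigma) (sigmaM : oadditive sigma).

Definition unit_subfield : fieldType :=
  subfield_fieldType (unit_field_divring_closed euclid sigmaM sigmaD) (unit_field_unit euclid).

Variables (t : A) (d : nat).
Hypotheses (sigma_t : sigma t = Some d) (d_gt0 : (0 < d)%N)
  (d_min : forall a m, sigma a = Some m -> (0 < m)%N -> (d <= m)%N).

Lemma t_neq0 : t != 0.
Proof. by apply/eqP => t0; move: sigma_t; rewrite t0 (euclid0 euclid). Qed.

Lemma divtP a : exists q r, a = t * q + r /\ r \in unit_field sigma.
Proof.
have [q [r [-> lt_rt]]] := euclid_divP euclid a t_neq0; exists q, r; split=> //.
move: lt_rt; rewrite inE sigma_t /olt; case E: (sigma r) => [[|m]|] //=.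
by have := d_min E (ltn0Sn m); lia.
Qed.

Lemma divt_sigma a m q r : sigma a = Some m -> (0 < m)%N -> a = t * q + r ->
  r \in unit_field sigma -> sigma q = Some (m - d)%N.
Proof.
move=> sigma_a m_gt0 def_a Kr; have tq : t * q = a + - r by rewrite def_a addrK.
have : sigma (a + - r) = Some m.
  rewrite (euclidD_eq euclid sigmaD) // /olt (euclidN euclid) sigma_a.
  by move: Kr; rewrite inE; case: (sigma r) => //= k; lia.
by rewrite -tq sigmaM sigma_t; case: (sigma q) => //= k [<-]; congr Some; lia.
Qed.

Lemma t_comm : commr_rmorph (val : unit_subfield -> A) t.
Proof. by move=> c; apply: mulrC. Qed.

Definition horner_t : {rmorphism {poly unit_subfield} -> A} := horner_morph t_comm.

Lemma horner_tX : horner_t 'X = t.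
Proof. exact: horner_morphX. Qed.

Lemma horner_tC c : horner_t c%:P = val c.
Proof. exact: horner_morphC. Qed.

Lemma horner_t_MXaddC p c : horner_t (p * 'X + c%:P) = horner_t p * t + val c.
Proof. by rewrite rmorphD rmorphM /= horner_tX horner_tC. Qed.

Lemma horner_t_sigma p : p != 0 -> sigma (horner_t p) = Some (d * (size p).-1)%N.
Proof.
elim/poly_ind: p => [|p c IHp]; first by rewrite eqxx.
have Kc : ole (sigma (val c)) (Some 0) := valP c.
rewrite horner_t_MXaddC size_MXaddC; have [-> pc0|p0 _] := eqVneq p 0.
  rewrite mul0r add0r polyC_eq0 in pc0.
  rewrite rmorph0 mul0r add0r /= (negbTE pc0) size_poly0 muln0.
  have /(euclid_neq0 euclid)[n sigma_c] : val c != 0.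
    by apply: contra pc0 => /eqP c0; apply/eqP/val_inj.
  by move: Kc; rewrite sigma_c; case: n sigma_c.
have size_p : (0 < size p)%N by rewrite size_poly_gt0.
rewrite /= (euclidD_eq euclid sigmaD) sigmaM (IHp p0) sigma_t /=.
  by rewrite -mulnSr prednK.
by move: Kc; rewrite /olt; case: (sigma (val c)) => //= k; lia.
Qed.

Lemma horner_t_inj : injective horner_t.
Proof.
move=> p q eq_pq; apply/eqP; rewrite -subr_eq0; apply: contraT => /horner_t_sigma.
by rewrite rmorphB /= eq_pq subrr (euclid0 euclid).
Qed.

Lemma horner_t_surj a : exists p, horner_t p = a.
Proof.
case E: (sigma a) => [m|]; last by exists 0; rewrite rmorph0; move/(euclid_eq0 euclid): E.
elim/ltn_ind: m a E => m IHm a sigma_a.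
have [q [r [def_a Kr]]] := divtP a.
have [m0|m_gt0] := posnP m.
  have Ka : a \in unit_field sigma by rewrite inE sigma_a m0.
  by exists (SubfieldOf Ka : unit_subfield)%:P; rewrite horner_tC.
have sigma_q := divt_sigma sigma_a m_gt0 def_a Kr.
have [|p tq] := IHm (m - d)%N _ q sigma_q; first lia.
exists (p * 'X + (SubfieldOf Kr : unit_subfield)%:P).
by rewrite horner_t_MXaddC tq def_a mulrC.
Qed.

Lemma horner_t_bij : bijective horner_t.
Proof.
have surj a : exists p, horner_t p == a by have [p <-] := horner_t_surj a; exists p.
exists (fun a => xchoose (surj a)) => [p|a]; last exact/eqP/(xchooseP (surj a)).
by apply: horner_t_inj; apply/eqP/(xchooseP (surj _)).
Qed.

Lemma sigma_dvd a m : sigma a = Some m -> (d %| m)%N.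
Proof.
have [p <-] := horner_t_surj a.
have [->|p0] := eqVneq p 0; first by rewrite rmorph0 (euclid0 euclid).
by rewrite horner_t_sigma // => -[<-]; apply: dvdn_mulr.
Qed.

Lemma sigma_gap a b m n : sigma a = Some m -> sigma b = Some n -> (m < n)%N -> (m <= n - d)%N.
Proof.
move=> sigma_a sigma_b; rewrite -subn_gt0 => gap_gt0.
by have := dvdn_leq gap_gt0 (dvdn_sub (sigma_dvd sigma_b) (sigma_dvd sigma_a)); lia.
Qed.

Lemma factroid_sublevel_sub F x : factroid F -> x \in F -> {subset sublevel sigma x <= F}.
Proof.
move=> fF; case E: (sigma x) => [n|] Fx a; last first.
  by rewrite inE E (euclid_le_None euclid) => /eqP ->; apply: factroid0.
have x0 : x != 0 by apply/eqP => x0; rewrite x0 (euclid0 euclid) in E.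
elim/ltn_ind: n x E Fx x0 a => n IHn x sigma_x Fx x0 a.
have KF r : r \in unit_field sigma -> r \in F := factroid_unit_field euclid fF x0 Fx.
rewrite inE sigma_x => le_an; have [n0|n_gt0] := posnP n.
  by apply: KF; rewrite n0 in le_an.
have [q [r [def_x Kr]]] := divtP x; have sigma_q := divt_sigma sigma_x n_gt0 def_x Kr.
have Fq : q \in F.
  apply: (factroid_cancel fF t_neq0); rewrite (_ : t * q = x - r); last by rewrite def_x addrK.
  by apply: factroidB => //; apply: KF.
have q0 : q != 0 by apply/eqP => q0; rewrite q0 (euclid0 euclid) in sigma_q.
have IHq := IHn (n - d)%N ltac:(lia) q sigma_q Fq q0.
have [u [r' [def_a lt_r'x]]] := euclid_divP euclid a x0.
have Fr' : r' \in F.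
  apply: IHq; rewrite inE sigma_q; case E: (sigma r') lt_r'x => [k|] //.
  by rewrite sigma_x /olt /= -ltnNge; apply: sigma_gap E sigma_x.
have Fxu : x * u \in F.
  have le_xu : ole (sigma (x * u)) (sigma x).
    rewrite (_ : x * u = a - r'); last by rewrite def_a addrK.
    by apply: ole_trans (euclidB euclid sigmaD _ _) _; rewrite ole_omax sigma_x le_an -sigma_x oltW.
  have [->|u0] := eqVneq u 0; first by rewrite mulr0; apply: factroid0.
  exact: (factroidM_unit fF (euclid_le0_unit euclid u0 (euclid_mul_le0 euclid sigmaM x0 le_xu)) Fx).
by rewrite def_a; apply: factroidD.
Qed.
End DegreeStructure.

Section DegreeFunction.
Variables (A : idomainType) (sigma : A -> option nat).
Hypothesis euclid : euclidean sigma.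

Lemma euclid_field_or_least_pos : is_field A \/ exists t d, [/\ sigma t = Some d, (0 < d)%N
  & forall a m, sigma a = Some m -> (0 < m)%N -> (d <= m)%N].
Proof.
case: (classic (exists d t, sigma t = Some d /\ (0 < d)%N)) => [has_pos|no_pos].
  have [d [t [sigma_t d_gt0]] d_min] := classical_ex_minn has_pos.
  by right; exists t, d; split=> // a m sigma_a m_gt0; apply: d_min; exists a.
left=> a a0; have [[|m] sigma_a] := euclid_neq0 euclid a0.
  by apply: (euclid_le0_unit euclid a0); rewrite sigma_a.
by case: no_pos; exists m.+1, a.
Qed.

Hypotheses (sigmaD : nonarch_euclid sigma) (sigmaM : oadditive sigma).

Lemma factroid_sublevel F x : factroid F -> x \in F -> {subset sublevel sigma x <= F}.
Proof.
move=> fF Fx; case: euclid_field_or_least_pos => [A_field|[t [d [sigma_t d_gt0 d_min]]]].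
  move=> a; rewrite inE => le_ax; have [->|a0] := eqVneq a 0; first exact: factroid0.
  have [x0|x0] := eqVneq x 0.
    by move: le_ax; rewrite x0 (euclid0 euclid) (euclid_le_None euclid) (negbTE a0).
  exact: (factroid_unit fF x0 Fx (A_field a a0)).
exact: (factroid_sublevel_sub euclid sigmaD sigmaM sigma_t d_gt0 d_min fF Fx).
Qed.

Lemma factroid_classification F :
  factroid F -> F =i predT \/ exists c, F =i sublevel sigma c.
Proof.
move=> fF.
case: (classic (exists N, forall x, x \in F -> ole (sigma x) (Some N))) => [[N le_N]|unbounded].
  right; case: (classic (exists n x, x \in F /\ sigma x = Some n)) => [has_val|no_val].
    have le_val n : (exists x, x \in F /\ sigma x = Some n) -> (n <= N)%N.
      by case=> x [Fx sigma_x]; have := le_N x Fx; rewrite sigma_x.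
    have [n [c [Fc sigma_c]] n_max] := classical_ex_maxn has_val le_val.
    exists c => y; apply/idP/idP => [Fy|]; last exact: factroid_sublevel.
    by rewrite inE sigma_c; case E: (sigma y) => [k|] //=; apply: n_max; exists y.
  exists 0 => y; rewrite inE (euclid0 euclid) (euclid_le_None euclid).
  apply/idP/eqP => [Fy|->]; last exact: factroid0.
  apply/eqP; rewrite -(euclid_le_None euclid).
  by case E: (sigma y) => [k|] //; case: no_val; exists k, y.
left=> a; rewrite inE /=; case E: (sigma a) => [N|]; last first.
  by move/(euclid_eq0 euclid): E => ->; apply: factroid0.
have [x Fx lt_Nx] : exists2 x, x \in F & ~~ ole (sigma x) (Some N).
  apply: NNPP => no_x; apply: unbounded; exists N => x Fx.
  by apply/negPn/negP => lt_Nx; apply: no_x; exists x.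
apply: (factroid_sublevel fF Fx); rewrite inE E.
by move: (ole_total (sigma x) (Some N)); rewrite (negbTE lt_Nx).
Qed.

Lemma degree_field_or_poly :
  is_field A \/ exists (k : fieldType) (f : {rmorphism {poly k} -> A}), bijective f.
Proof.
case: euclid_field_or_least_pos => [|[t [d [sigma_t d_gt0 d_min]]]]; first by left.
by right; exists (unit_subfield euclid sigmaD sigmaM), (horner_t euclid sigmaD sigmaM t);
  apply: horner_t_bij sigma_t d_gt0 d_min.
Qed.

End DegreeFunction.

Lemma degree_iff_factroids (A : idomainType) (sigma : A -> option nat) : euclidean sigma ->
  nonarch_euclid sigma /\ oadditive sigma <->
  (forall F : pred A, factroid F <-> (F =i predT \/ exists c, F =i sublevel sigma c)) /\
  (forall m n, (exists a, sigma a = m) -> (exists b, sigma b = n) ->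
     forall x y, sigma x = m -> sigma y = n -> sigma (x * y) = oadd m n).
Proof.
move=> euclid; split=> [[sigmaD sigmaM]|[factroidsE sigmaM]].
  split=> [F|m n _ _ x y <- <-]; last exact: sigmaM.
  split; first exact: factroid_classification.
  case=> [eqF|[c eqF]]; apply: (factroid_eq eqF); first exact: factroidT.
  exact: sublevel_factroid.
have {}sigmaM : oadditive sigma by move=> a b; apply: sigmaM; [exists a | exists b |..].
split=> // a b; pose c := if ole (sigma a) (sigma b) then b else a.
have sigma_c : sigma c = omax (sigma a) (sigma b) by rewrite /c /omax; case: ifP.
have fC : factroid (sublevel sigma c) by apply/factroidsE; right; exists c.
have := factroidD fC (_ : a \in sublevel sigma c) (_ : b \in sublevel sigma c).
by rewrite !inE sigma_c ole_maxl ole_maxr; apply.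
Qed.

Definition trivial_degree (A : idomainType) (a : A) : option nat :=
  if a == 0 then None else Some 0%N.

Lemma degree_function_trivial (A : idomainType) : is_field A -> degree_function (@trivial_degree A).
Proof.
move=> A_field; split=> [|a b|a b]; rewrite /trivial_degree.
- split=> [a|]; first by rewrite /trivial_degree; case: eqP.
  split=> [a b b0|a b b0]; rewrite /trivial_degree.
    by exists (b^-1 * a), 0; rewrite addr0 mulVKr ?A_field // eqxx (negbTE b0).
  by case: ifP => // a0; rewrite mulf_eq0 a0 (negbTE b0).
- have [->|a0] := eqVneq a 0; first by rewrite add0r; case: ifP.
  by case: ifP; case: ifP.
- by rewrite mulf_eq0; case: eqP; case: eqP.
Qed.

Definition poly_degree (k : fieldType) (p : {poly k}) : option nat :=
  if p == 0 then None else Some (size p).-1.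

Lemma ole_poly_degree (k : fieldType) (p q : {poly k}) :
  ole (poly_degree p) (poly_degree q) = (size p <= size q)%N.
Proof.
rewrite /poly_degree -!size_poly_eq0.
by case: (size p) => [|m]; case: (size q) => [|n].
Qed.

Lemma degree_function_poly (k : fieldType) : degree_function (@poly_degree k).
Proof.
have degree_mul p q :
    p != 0 -> q != 0 -> poly_degree (p * q) = oadd (poly_degree p) (poly_degree q).
  move=> p0 q0; rewrite /poly_degree mulf_eq0 (negbTE p0) (negbTE q0) size_mul //=.
  have sp : (0 < size p)%N by rewrite size_poly_gt0.
  have sq : (0 < size q)%N by rewrite size_poly_gt0.
  by rewrite -(prednK sp) -(prednK sq) addSn addnS.
split=> [|p q|p q].
- split=> [p|]; first by rewrite /poly_degree; case: eqP.
  split=> [p q q0|p q q0]; last first.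
    rewrite ole_poly_degree; have [->|p0] := eqVneq p 0; first by rewrite mul0r.
    have sq : (0 < size q)%N by rewrite size_poly_gt0.
    by rewrite size_mul // -(prednK sq) addnS leq_addr.
  exists (p %/ q), (p %% q); split; first by rewrite mulrC -divp_eq.
  by rewrite /olt ole_poly_degree -ltnNge ltn_modp.
- rewrite /omax ole_poly_degree; case: leqP => [le_pq|/ltnW le_qp];
    rewrite ole_poly_degree; apply: leq_trans (size_polyD p q) _;
    by rewrite geq_max leqnn ?le_pq ?le_qp.
- have [->|p0] := eqVneq p 0; first by rewrite mul0r /poly_degree eqxx.
  have [->|q0] := eqVneq q 0; last exact: degree_mul.
  by rewrite mulr0 /poly_degree eqxx; case: eqP.
Qed.

Section Transport.
Variables (B A : idomainType) (f : {rmorphism B -> A}) (g : A -> B).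
Hypotheses (fK : cancel f g) (gK : cancel g f).
Variable sigma : B -> option nat.

Lemma degree_function_comp : degree_function sigma -> degree_function (sigma \o g).
Proof.
have g_eq0 a : (g a == 0) = (a == 0) by rewrite -(inj_eq (can_inj fK)) gK rmorph0.
case=> [[sigma_eq0 [sigma_div sigma_mulr]] sigmaD sigmaM].
split=> [|a b|a b]; last 2 first.
- by rewrite /= -[a]gK -[b]gK -rmorphD !fK.
- by rewrite /= -[a]gK -[b]gK -rmorphM !fK.
split=> [a|].
  rewrite /= sigma_eq0; split=> [|->]; first by move/eqP; rewrite g_eq0 => /eqP.
  by rewrite -(rmorph0 f) fK.
split=> a b b0; rewrite -g_eq0 in b0.
  have [q [r [div_ab lt_rb]]] := sigma_div (g a) (g b) b0.
  by exists (f q), (f r); rewrite /= !fK -[a]gK div_ab rmorphD rmorphM gK.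
by rewrite /= -[a]gK -[b]gK -rmorphM !fK; apply: sigma_mulr.
Qed.

End Transport.

Theorem proposition8p4 (R : realFieldType) (A : idomainType) :
  (forall sigma : A -> option nat, euclidean sigma ->
    [<->
      (* (a) *)
      nonarch_euclid sigma /\
        (forall a b, sigma (a * b) = oadd (sigma a) (sigma b));
      (* (b) *)
      nonarch_norm (fun a => pow2 R (sigma a));
      (* (c) *)
      is_norm (fun a => pow2 R (sigma a)) /\
        (forall z : int, ole (sigma (z%:~R)) (sigma 1));
      (* (d) *)
      is_norm (fun a => pow2 R (sigma a)) /\ contains_field A;
      (* (e) *)
      (forall F : pred A, factroid F <->
         (F =i predT \/ exists c : A, F =i [pred x | ole (sigma x) (sigma c)])) /\
      (forall m n, (exists a, sigma a = m) -> (exists b, sigma b = n) ->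
         forall x y, sigma x = m -> sigma y = n -> sigma (x * y) = oadd m n)
    ]) /\
  ((exists sigma : A -> option nat, euclidean sigma /\
      nonarch_euclid sigma /\
        (forall a b, sigma (a * b) = oadd (sigma a) (sigma b))) <->
   (is_field A \/
    exists k : fieldType, exists f : {rmorphism {poly k} -> A}, bijective f)).
Proof.
split=> [sigma euclid|].
  have normP := nonarch_normP R euclid.
  have a_of_c (normN : is_norm (fun a => pow2 R (sigma a))) le_int :
      nonarch_euclid sigma /\ oadditive sigma :=
    conj (nonarch_of_norm_int euclid normN le_int) (is_norm_oadditive normN).
  have d_of_a (a : nonarch_euclid sigma /\ oadditive sigma) : contains_field A.
    by case: a => sigmaD sigmaM; apply: contains_field_of_degree euclid sigmaM sigmaD.
  split=> [/normP //|]; split=> [b|].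
    have [normN _] := b; split=> //.
    exact: (norm_int_le_of_contains_field euclid normN (d_of_a (normP.1 b))).
  split=> [[normN le_int]|]; first by split=> //; exact: d_of_a (a_of_c normN le_int).
  split=> [[normN hasK]|]; last by move/(degree_iff_factroids euclid).
  apply/(degree_iff_factroids euclid).
  exact: a_of_c normN (norm_int_le_of_contains_field euclid normN hasK).
split=> [[sigma [euclid [sigmaD sigmaM]]]|[A_field|[k [f [g fK gK]]]]].
- exact: degree_field_or_poly euclid sigmaD sigmaM.
- by have [] := degree_function_trivial A_field; exists (@trivial_degree A).
- by have [] := degree_function_comp fK gK (degree_function_poly k); exists (@poly_degree k \o g).
Qed.
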